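(* Let $A\subset\{1,2,3,\dots\}$ be a set whose natural density $d(A)=\lim_{n\to\infty}\#(A\cap[1,n])/n$ exists and satisfies $d(A)>0$. Let $F_A(s)=-\sum_{j\in A}\ln(1-e^{sj})$ for $s<0$. Then for every integer $m\ge0$, $$F_A^{(m)}(-s)\sim d(A)\,\zeta(2)\,\Gamma(m+1)\,\frac{1}{s^{m+1}},\quad\text{as } s\downarrow0.$$
   Context: $F_A$ is the fulcrum $s\mapsto\ln P_A(e^s)$ of $P_A(z)=\prod_{j\in A}(1-z^j)^{-1}$, the generating function of partitions with parts in $A$. $F_A^{(m)}$ is the $m$-th derivative. $\alpha(s)\sim\beta(s)$ means $\alpha(s)/\beta(s)\to1$. $\zeta$ is the Riemann zeta function and $\Gamma$ the Gamma function. *)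

From Stdlib Require Import Reals Arith.
From Coquelicot Require Import Coquelicot.
Open Scope R_scope.

(* A subset of the positive integers is encoded as a boolean predicate on nat
   together with the hypothesis [A 0 = false]. *)

Definition countA (A : nat -> bool) (n : nat) : R :=
  sum_n_m (fun k => if A k then 1 else 0) 1 n.

Definition has_density (A : nat -> bool) (d : R) : Prop :=
  is_lim_seq (fun n => countA A n / INR n) d.

Definition F_A (A : nat -> bool) (s : R) : R :=
  - Series (fun j => if A j then ln (1 - exp (s * INR j)) else 0).

Definition zeta (s : R) : R :=
  Series (fun n => / Rpower (INR (S n)) s).

Definition Gamma_nat_succ (m : nat) : R := INR (Factorial.fact m).

From Stdlib Require Import Reals Factorial Lra Lia.
From Coquelicot Require Import Coquelicot.
Open Scope R_scope.

(* Expanding the logarithm and exchanging the two sums,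
   F_A(y) = sum_(k >= 1) (1/k) P_0(e^(k y)) for y < 0, where P_m(X) = sum_(j in A) j^m X^j;
   differentiating termwise, F_A^(m)(y) = sum_(k >= 1) k^(m-1) P_m(e^(k y)). Hence
   s^(m+1) F_A^(m)(-s) = sum_(k >= 1) k^(-2) g(k s) with g(t) = t^(m+1) P_m(e^(-t)).
   An Abelian argument gives (1 - X)^(m+1) P_m(X) -> d m! as X -> 1-: summation by parts
   against the counting error #(A ∩ [1,n]) - d n reduces it to the set of all positive
   integers, for which sum_n (n+1)...(n+m) X^n = m! / (1 - X)^(m+1) is explicit.
   Thus g(t) -> d m! as t -> 0+, and since g is bounded the limit passes through the
   series in k, giving d m! zeta(2). Below, P_m is [gen A m] and g is [tgen A m]. *)

(** * Series of real numbers *)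

Lemma sum_n_Sn_R (a : nat -> R) n : sum_n a (S n) = sum_n a n + a (S n).
Proof. now rewrite sum_Sn. Qed.

Lemma sum_n_nonneg (a : nat -> R) n : (forall k, 0 <= a k) -> 0 <= sum_n a n.
Proof.
  intros Ha; induction n as [|n IH]; [now rewrite sum_O|].
  rewrite sum_n_Sn_R; specialize (Ha (S n)); lra.
Qed.

Lemma ex_pseries_R (a : nat -> R) x : ex_pseries a x <-> ex_series (fun n => a n * x ^ n).
Proof. split; apply ex_series_ext; intros n; apply Rmult_comm. Qed.

Lemma ex_series_le_R (a b : nat -> R) :
  (forall n, Rabs (a n) <= b n) -> ex_series b -> ex_series a.
Proof. apply (ex_series_le (V := R_CompleteNormedModule)). Qed.

Lemma ex_series_le_nonneg (a b : nat -> R) :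
  (forall n, 0 <= a n <= b n) -> ex_series b -> ex_series a.
Proof.
  intros Hab; apply ex_series_le_R; intros n.
  rewrite Rabs_pos_eq; apply Hab.
Qed.

Section NonnegSeries.

Variable a : nat -> R.
Hypothesis a_nonneg : forall n, 0 <= a n.

Lemma sum_n_le_Series n : ex_series a -> sum_n a n <= Series a.
Proof.
  intros Ha; apply (is_lim_seq_incr_compare (sum_n a)); [exact (Series_correct _ Ha)|].
  intros k; rewrite sum_n_Sn_R; specialize (a_nonneg (S k)); lra.
Qed.

Lemma term_le_Series n : ex_series a -> a n <= Series a.
Proof.
  intros Ha; apply Rle_trans with (sum_n a n); [|now apply sum_n_le_Series].
  destruct n as [|n]; [rewrite sum_O; lra|].
  rewrite sum_n_Sn_R; pose proof (sum_n_nonneg a n a_nonneg); lra.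
Qed.

Lemma Series_nonneg : ex_series a -> 0 <= Series a.
Proof. intros Ha; apply Rle_trans with (a 0%nat); [apply a_nonneg | now apply term_le_Series]. Qed.

Lemma ex_series_nonneg_bounded B : (forall n, sum_n a n <= B) -> ex_series a.
Proof.
  intros HB; destruct (growing_cv (sum_n a)) as [l Hl].
  - intros n; rewrite sum_n_Sn_R; specialize (a_nonneg (S n)); lra.
  - exists B; intros x [n ->]; apply HB.
  - exists l; now apply is_lim_seq_Reals.
Qed.

End NonnegSeries.

Lemma Series_le_ub (a : nat -> R) B : ex_series a -> (forall n, sum_n a n <= B) -> Series a <= B.
Proof.
  intros Ha HB.
  exact (is_lim_seq_le (sum_n a) (fun _ => B) (Series a) B HB
           (Series_correct _ Ha) (is_lim_seq_const B)).
Qed.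

Lemma Rabs_Series_le (a b : nat -> R) :
  (forall n, Rabs (a n) <= b n) -> ex_series b -> Rabs (Series a) <= Series b.
Proof.
  intros Hab Hb; apply Rle_trans with (Series (fun n => Rabs (a n))).
  - apply Series_Rabs, (ex_series_le_R _ b); [|exact Hb].
    intros n; rewrite Rabs_Rabsolu; apply Hab.
  - apply Series_le; [|exact Hb]; intros n; split; [apply Rabs_pos | apply Hab].
Qed.

Lemma Series_tail_lt (a : nat -> R) : ex_series a -> forall eps, 0 < eps ->
  exists N, forall n, (N <= n)%nat -> Rabs (Series (fun k => a (n + k)%nat)) < eps.
Proof.
  intros Ha eps Heps.
  assert (Hlim : is_lim_seq (sum_n a) (Series a)) by exact (Series_correct _ Ha).
  destruct (proj2 (is_lim_seq_spec _ _) Hlim (mkposreal eps Heps)) as [N HN].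
  exists (S N); intros n Hn.
  specialize (HN (pred n) ltac:(lia)); simpl in HN.
  rewrite (Series_incr_n a n), <- sum_n_Reals in HN by (lia || exact Ha).
  rewrite <- Rabs_Ropp; replace (- _)
    with (sum_n a (pred n) - (sum_n a (pred n) + Series (fun k => a (n + k)%nat))) by ring.
  exact HN.
Qed.

Section Tonelli.

Variable a : nat -> nat -> R.
Hypothesis a_nonneg : forall j k, 0 <= a j k.

Lemma Series_sum_n J : (forall j, ex_series (fun k => a j k)) ->
  ex_series (fun k => sum_n (fun j => a j k) J) /\
  Series (fun k => sum_n (fun j => a j k) J) = sum_n (fun j => Series (fun k => a j k)) J.
Proof.
  intros Hrow; induction J as [|J [IHex IHeq]].
  - split; [apply (ex_series_ext (a 0%nat)) | rewrite sum_O; apply Series_ext];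
      [| apply Hrow |]; intros k; now rewrite sum_O.
  - split.
    + apply (ex_series_ext (fun k => sum_n (fun j => a j k) J + a (S J) k));
        [intros k; now rewrite sum_n_Sn_R | now apply (ex_series_plus (V := R_NormedModule))].
    + rewrite sum_n_Sn_R, <- IHeq, <- Series_plus by easy.
      apply Series_ext; intros k; now rewrite sum_n_Sn_R.
Qed.

Lemma Series_Series_le :
  (forall k, ex_series (fun j => a j k)) -> ex_series (fun k => Series (fun j => a j k)) ->
  (forall j, ex_series (fun k => a j k)) /\ ex_series (fun j => Series (fun k => a j k)) /\
  Series (fun j => Series (fun k => a j k)) <= Series (fun k => Series (fun j => a j k)).
Proof.
  intros Hcol Hcols.
  assert (Hrow : forall j, ex_series (fun k => a j k)).
  { intros j; apply (ex_series_le_nonneg _ _ (fun k => conj (a_nonneg j k)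
      (term_le_Series (fun j => a j k) (fun j => a_nonneg j k) j (Hcol k)))), Hcols. }
  assert (Hpart : forall J,
    sum_n (fun j => Series (fun k => a j k)) J <= Series (fun k => Series (fun j => a j k))).
  { intros J; destruct (Series_sum_n J Hrow) as [_ <-].
    apply Series_le; [|exact Hcols]; intros k; split.
    - apply sum_n_nonneg; intros j; apply a_nonneg.
    - apply sum_n_le_Series; [intros j; apply a_nonneg | apply Hcol]. }
  assert (Hrows : ex_series (fun j => Series (fun k => a j k))).
  { apply (ex_series_nonneg_bounded _ (fun j => Series_nonneg _ (a_nonneg j) (Hrow j)) _ Hpart). }
  repeat split; try assumption; now apply Series_le_ub.
Qed.

End Tonelli.

Lemma Series_Series_comm (a : nat -> nat -> R) : (forall j k, 0 <= a j k) ->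
  (forall k, ex_series (fun j => a j k)) -> ex_series (fun k => Series (fun j => a j k)) ->
  Series (fun j => Series (fun k => a j k)) = Series (fun k => Series (fun j => a j k)).
Proof.
  intros Ha Hcol Hcols.
  destruct (Series_Series_le a Ha Hcol Hcols) as [Hrow [Hrows Hle]].
  destruct (Series_Series_le (fun k j => a j k) (fun k j => Ha j k) Hrow Hrows) as [_ [_ Hge]].
  lra.
Qed.

Lemma filter_forall_lt {T} {F : (T -> Prop) -> Prop} {FF : Filter F} (P : nat -> T -> Prop) N :
  (forall k, (k < N)%nat -> F (P k)) -> F (fun s => forall k, (k < N)%nat -> P k s).
Proof.
  induction N as [|N IH]; intros HP.
  - apply filter_forall; intros s k Hk; lia.
  - apply (filter_imp (fun s => (forall k, (k < N)%nat -> P k s) /\ P N s)).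
    + intros s [Hlt HN] k Hk; destruct (Nat.eq_dec k N) as [->|]; [exact HN | apply Hlt; lia].
    + apply filter_and; [apply IH; intros k Hk; apply HP; lia | apply HP; lia].
Qed.

Lemma Rabs_Series_mul_sub_le (w g : nat -> R) L K eta N :
  (forall k, 0 <= w k) -> ex_series w -> 0 <= eta ->
  (forall k, Rabs (g k) <= K) -> (forall k, (k < N)%nat -> Rabs (g k - L) <= eta) ->
  Rabs (Series (fun k => w k * g k) - L * Series w)
  <= eta * Series w + (K + Rabs L) * Series (fun k => w (N + k)%nat).
Proof.
  intros Hw Hwex Heta HK Hnear; set (C := K + Rabs L).
  assert (HC : forall k, Rabs (g k - L) <= C).
  { intros k; unfold Rminus; eapply Rle_trans; [apply Rabs_triang|].
    rewrite Rabs_Ropp; specialize (HK k); unfold C; lra. }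
  assert (Hex : ex_series (fun k => w k * g k)).
  { apply (ex_series_le_R _ (fun k => K * w k));
      [|now apply (ex_series_scal_l (V := R_NormedModule))].
    intros k; rewrite Rabs_mult, Rabs_pos_eq, Rmult_comm by apply Hw.
    apply Rmult_le_compat_r; [apply Hw | apply HK]. }
  set (v := fun k => if (k <? N)%nat then 0 else w k).
  assert (Hv : Series v = Series (fun k => w (N + k)%nat)).
  { rewrite (Series_incr_n_aux v N).
    - apply Series_ext; intros k; unfold v.
      now replace ((N + k <? N)%nat) with false by (symmetry; apply Nat.ltb_ge; lia).
    - intros k Hk; unfold v.
      now replace ((k <? N)%nat) with true by (symmetry; apply Nat.ltb_lt; lia). }
  assert (Hvex : ex_series v).
  { apply (ex_series_le_nonneg _ w); [|exact Hwex]; intros k; unfold v.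
    destruct (k <? N)%nat; specialize (Hw k); lra. }
  replace (Series _ - L * Series w) with (Series (fun k => w k * (g k - L))).
  2: { rewrite <- Series_scal_l, <- Series_minus; [apply Series_ext; intros; ring | easy |].
       now apply (ex_series_scal_l (V := R_NormedModule)). }
  rewrite <- Hv, <- !Series_scal_l, <- Series_plus
    by now apply (ex_series_scal_l (V := R_NormedModule)).
  apply Rabs_Series_le.
  - intros k; rewrite Rabs_mult, (Rabs_pos_eq (w k)) by apply Hw.
    assert (Hwk := Hw k); assert (0 <= eta * w k) by now apply Rmult_le_pos.
    unfold v; destruct (k <? N)%nat eqn:Hk.
    + apply Nat.ltb_lt, Hnear in Hk.
      assert (w k * Rabs (g k - L) <= w k * eta) by now apply Rmult_le_compat_l.
      lra.
    + assert (w k * Rabs (g k - L) <= w k * C) by (apply Rmult_le_compat_l; [lra | apply HC]).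
      lra.
  - apply (ex_series_plus (V := R_NormedModule));
      now apply (ex_series_scal_l (V := R_NormedModule)).
Qed.

Lemma filterlim_Series_dominated {T} {F : (T -> Prop) -> Prop} {FF : Filter F}
  (w : nat -> R) (G : nat -> T -> R) (L K : R) :
  (forall k, 0 <= w k) -> ex_series w ->
  F (fun s => forall k, Rabs (G k s) <= K) ->
  (forall k, filterlim (G k) F (locally L)) ->
  filterlim (fun s => Series (fun k => w k * G k s)) F (locally (L * Series w)).
Proof.
  intros Hw Hwex Hbound Hlim; apply filterlim_locally; intros eps.
  assert (Heps := cond_pos eps).
  set (W := Series w); assert (HW : 0 <= W) by now apply Series_nonneg.
  set (C := Rabs (K + Rabs L)); assert (HC := Rabs_pos (K + Rabs L)); fold C in HC.
  destruct (Series_tail_lt w Hwex (eps / (2 * (C + 1))) ltac:(apply Rdiv_lt_0_compat; lra)) as [N HN].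
  specialize (HN N (le_n N)).
  assert (Htail : 0 <= Series (fun k => w (N + k)%nat))
    by (apply Series_nonneg; [intros k; apply Hw | now apply ex_series_incr_n]).
  rewrite Rabs_pos_eq in HN by exact Htail.
  set (eta := eps / (2 * (W + 1))).
  assert (Heta : 0 < eta) by (apply Rdiv_lt_0_compat; lra).
  assert (Hnear : F (fun s => forall k, (k < N)%nat -> Rabs (G k s - L) < eta)).
  { apply filter_forall_lt; intros k _.
    exact (proj1 (filterlim_locally _ _) (Hlim k) (mkposreal eta Heta)). }
  generalize (filter_and _ _ Hnear Hbound); apply filter_imp; intros s [Hs HK].
  change (Rabs (Series (fun k => w k * G k s) - L * W) < eps).
  eapply Rle_lt_trans.
  { apply (Rabs_Series_mul_sub_le w (fun k => G k s) L K eta N Hw Hwex); [lra | exact HK |].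
    intros k Hk; left; now apply Hs. }
  fold W; assert (eta * W < eps / 2).
  { unfold eta; apply (Rmult_lt_reg_r (2 * (W + 1))); [lra|]; field_simplify; [nra | lra]. }
  assert ((K + Rabs L) * Series (fun k => w (N + k)%nat) < eps / 2).
  { apply Rle_lt_trans with (C * (eps / (2 * (C + 1)))).
    - apply Rle_trans with (C * Series (fun k => w (N + k)%nat)).
      + apply Rmult_le_compat_r; [exact Htail | apply Rle_abs].
      + apply Rmult_le_compat_l; lra.
    - apply (Rmult_lt_reg_r (2 * (C + 1))); [lra|]; field_simplify; [nra | lra]. }
  lra.
Qed.

(** * Term-by-term differentiation *)

Lemma MVT_Rabs_le (f f' : R -> R) y h M :
  (forall z, Rabs (z - y) <= Rabs h -> is_derive f z (f' z)) ->
  (forall z, Rabs (z - y) <= Rabs h -> Rabs (f' z) <= M) ->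
  Rabs (f (y + h) - f y) <= M * Rabs h.
Proof.
  intros Hf Hf'.
  assert (Hseg : forall z, Rmin y (y + h) <= z <= Rmax y (y + h) -> Rabs (z - y) <= Rabs h).
  { intros z; unfold Rmin, Rmax; destruct (Rle_dec y (y + h));
      intros; unfold Rabs; destruct (Rcase_abs (z - y)), (Rcase_abs h); lra. }
  destruct (MVT_gen f y (y + h) f') as [c [Hc ->]].
  - intros z Hz; apply Hf, Hseg; lra.
  - intros z Hz; apply continuity_pt_filterlim, (ex_derive_continuous f z).
    exists (f' z); apply Hf, Hseg; lra.
  - replace (y + h - y) with h by ring; rewrite Rabs_mult.
    apply Rmult_le_compat_r; [apply Rabs_pos | now apply Hf', Hseg].
Qed.

Section SeriesDerive.

Variables (u u' : nat -> R -> R) (M : nat -> R) (y r : R).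
Hypothesis r_pos : 0 < r.
Hypothesis u_derive : forall n z, Rabs (z - y) < r -> is_derive (u n) z (u' n z).
Hypothesis u'_bound : forall n z, Rabs (z - y) < r -> Rabs (u' n z) <= M n.
Hypothesis M_ex : ex_series M.
Hypothesis u_ex : forall z, Rabs (z - y) < r -> ex_series (fun n => u n z).

Let y_near : Rabs (y - y) < r.
Proof. rewrite Rminus_eq_0, Rabs_R0; exact r_pos. Qed.

Let u'_ex : ex_series (fun n => u' n y).
Proof. apply (ex_series_le_R _ M); [intros n; now apply u'_bound | exact M_ex]. Qed.

(* Each tail term is controlled by the mean value theorem, uniformly in [h]. *)
Lemma diff_quotient_tail_le N h : h <> 0 -> Rabs h < r ->
  Rabs ((Series (fun k => u (N + k)%nat (y + h)) - Series (fun k => u (N + k)%nat y)) / h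
        - Series (fun k => u' (N + k)%nat y))
  <= 2 * Series (fun k => M (N + k)%nat).
Proof.
  intros Hh0 Hh.
  assert (Hyh : Rabs (y + h - y) < r) by now replace (y + h - y) with h by ring.
  assert (Hex1 := proj1 (ex_series_incr_n _ N) (u_ex _ Hyh)).
  assert (Hex0 := proj1 (ex_series_incr_n _ N) (u_ex _ y_near)).
  assert (Hex' := proj1 (ex_series_incr_n _ N) u'_ex).
  replace (_ / h - _) with
    (Series (fun k => (u (N + k)%nat (y + h) - u (N + k)%nat y) / h - u' (N + k)%nat y)).
  2: { assert (Hdiff : ex_series (fun k => u (N + k)%nat (y + h) - u (N + k)%nat y))
         by now apply (ex_series_minus (V := R_NormedModule)).
       unfold Rdiv; rewrite Series_minus, Series_scal_r, Series_minus
         by (try apply ex_series_scal_r; easy).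
       ring. }
  rewrite <- Series_scal_l.
  apply Rabs_Series_le;
    [intros k | apply (ex_series_scal_l (V := R_NormedModule)), ex_series_incr_n, M_ex].
  assert (Hmvt : Rabs (u (N + k)%nat (y + h) - u (N + k)%nat y) <= M (N + k)%nat * Rabs h).
  { apply MVT_Rabs_le with (u' (N + k)%nat); intros z Hz; [apply u_derive | apply u'_bound]; lra. }
  assert (Hy' := u'_bound (N + k) y y_near).
  assert (Habs : 0 < Rabs h) by now apply Rabs_pos_lt.
  set (D := u (N + k)%nat (y + h) - u (N + k)%nat y) in *.
  set (w := u' (N + k)%nat y) in *.
  replace (D / h - w) with (D / h + - w) by ring.
  eapply Rle_trans; [apply Rabs_triang|]; rewrite Rabs_Ropp.
  unfold Rdiv; rewrite Rabs_mult, Rabs_inv.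
  apply (Rmult_le_compat_r (/ Rabs h)) in Hmvt; [|left; now apply Rinv_0_lt_compat].
  rewrite Rmult_assoc, Rinv_r in Hmvt by lra; lra.
Qed.

Lemma is_derive_Series :
  is_derive (fun z => Series (fun n => u n z)) y (Series (fun n => u' n y)).
Proof.
  apply is_derive_Reals; intros eps Heps.
  destruct (Series_tail_lt M M_ex (eps / 4) ltac:(lra)) as [N0 HN0].
  set (N := S N0).
  assert (HtailM : 2 * Series (fun k => M (N + k)%nat) < eps / 2).
  { specialize (HN0 N ltac:(unfold N; lia)); apply Rabs_def2 in HN0; lra. }
  assert (Hhead := is_derive_sum_n (V := R_NormedModule) u (pred N) y (fun n => u' n y)
                     (fun n _ => u_derive n y y_near)).
  apply is_derive_Reals in Hhead; destruct (Hhead (eps / 2) ltac:(lra)) as [d1 Hd1].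
  exists (mkposreal (Rmin r d1) (Rmin_pos _ _ r_pos (cond_pos d1))); simpl; intros h Hh0 Hh.
  assert (Hhr : Rabs h < r) by (eapply Rlt_le_trans; [exact Hh | apply Rmin_l]).
  assert (Hhd1 : Rabs h < d1) by (eapply Rlt_le_trans; [exact Hh | apply Rmin_r]).
  assert (Hyh : Rabs (y + h - y) < r) by now replace (y + h - y) with h by ring.
  specialize (Hd1 h Hh0 Hhd1); rewrite !sum_n_Reals in Hd1.
  assert (Htail := diff_quotient_tail_le N h Hh0 Hhr).
  rewrite (Series_incr_n _ N), (Series_incr_n (fun n => u n y) N),
    (Series_incr_n (fun n => u' n y) N) by (unfold N; lia || auto).
  replace (_ / h - _) with
    ((sum_f_R0 (fun n => u n (y + h)) (pred N) - sum_f_R0 (fun n => u n y) (pred N)) / h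
       - sum_f_R0 (fun n => u' n y) (pred N)
     + ((Series (fun k => u (N + k)%nat (y + h)) - Series (fun k => u (N + k)%nat y)) / h
        - Series (fun k => u' (N + k)%nat y))) by (field; exact Hh0).
  eapply Rle_lt_trans; [apply Rabs_triang | lra].
Qed.

End SeriesDerive.

(** * Rising factorials and power series *)

Definition prev (B : nat -> R) (n : nat) : R := match n with O => 0 | S k => B k end.

Lemma sum_n_sub_prev (c : nat -> R) n : sum_n c n - prev (sum_n c) n = c n.
Proof. destruct n as [|n]; simpl; [rewrite sum_O | rewrite sum_n_Sn_R]; ring. Qed.

Lemma is_series_sub_prev (B : nat -> R) x : ex_series (fun n => B n * x ^ n) ->
  is_series (fun n => (B n - prev B n) * x ^ n) ((1 - x) * Series (fun n => B n * x ^ n)).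
Proof.
  intros HB; set (S0 := Series (fun n => B n * x ^ n)).
  assert (H1 : is_series (fun n => B n * x ^ n) S0) by now apply Series_correct.
  assert (H2 : is_series (fun n => prev B n * x ^ n) (x * S0)).
  { apply is_series_decr_1.
    (* [ring] needs the equation retyped from [R_NormedModule] to [R]. *)
    match goal with |- is_series _ ?l =>
      replace l with (x * S0) by (change (@eq R (x * S0) (x * S0 - 0 * 1)); ring) end.
    apply (is_series_ext (fun n => x * (B n * x ^ n))); [intros n; simpl; ring|].
    now apply (is_series_scal_l (V := R_NormedModule)). }
  apply (is_series_ext (fun n => B n * x ^ n - prev B n * x ^ n)); [intros n; simpl; ring|].
  replace ((1 - x) * S0) with (S0 - x * S0) by ring.
  now apply (is_series_minus (V := R_NormedModule)).
Qed.

Lemma sum_n_mul_nondecr_le (c w : nat -> R) B n :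
  (forall j, 0 <= w j) -> (forall j, w j <= w (S j)) ->
  (forall j, (j <= n)%nat -> Rabs (sum_n c j) <= B) ->
  Rabs (sum_n (fun j => c j * w j) n) <= 2 * B * w n.
Proof.
  intros Hw Hincr HB.
  assert (Hparts : forall i, (i <= n)%nat ->
    Rabs (sum_n (fun j => c j * w j) i - sum_n c i * w i) <= B * (w i - w 0%nat)).
  { induction i as [|i IH]; intros Hi.
    - rewrite !sum_O, Rminus_eq_0, Rminus_eq_0, Rabs_R0, Rmult_0_r; lra.
    - rewrite !sum_n_Sn_R.
      replace (_ - _) with (sum_n (fun j => c j * w j) i - sum_n c i * w i
                            - sum_n c i * (w (S i) - w i)) by ring.
      unfold Rminus at 1; eapply Rle_trans; [apply Rabs_triang|]; rewrite Rabs_Ropp, Rabs_mult.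
      rewrite (Rabs_pos_eq (w (S i) - w i)) by (specialize (Hincr i); lra).
      specialize (IH ltac:(lia)); specialize (HB i ltac:(lia)); specialize (Hincr i).
      assert (Rabs (sum_n c i) * (w (S i) - w i) <= B * (w (S i) - w i))
        by (apply Rmult_le_compat_r; lra).
      lra. }
  specialize (Hparts n (le_n n)).
  assert (Hn := HB n (le_n n)).
  assert (HB0 : 0 <= B) by (eapply Rle_trans; [apply Rabs_pos | apply (HB 0%nat); lia]).
  assert (Habs : Rabs (sum_n c n * w n) <= B * w n)
    by (rewrite Rabs_mult, (Rabs_pos_eq (w n)) by apply Hw;
        apply Rmult_le_compat_r; [apply Hw | exact Hn]).
  replace (sum_n _ n) with ((sum_n (fun j => c j * w j) n - sum_n c n * w n) + sum_n c n * w n) by ring.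
  eapply Rle_trans; [apply Rabs_triang|].
  assert (Hw0 := Hw 0%nat); assert (0 <= B * w 0%nat) by now apply Rmult_le_pos.
  lra.
Qed.

(* [rising p k = (k+1)(k+2)...(k+p)], the coefficient of [x^k] in [p! / (1 - x)^(p+1)]. *)
Definition rising (p k : nat) : R := INR (fact (k + p)) / INR (fact k).

Lemma INR_fact_pos n : 0 < INR (fact n).
Proof. apply lt_0_INR, lt_O_fact. Qed.

Lemma rising_0_l k : rising 0 k = 1.
Proof. unfold rising; rewrite Nat.add_0_r; field; apply Rgt_not_eq, INR_fact_pos. Qed.

Lemma rising_0_r p : rising p 0 = INR (fact p).
Proof. unfold rising; simpl; lra. Qed.

Lemma rising_Sr p k : rising (S p) k = (INR k + INR (S p)) * rising p k.
Proof.
  unfold rising; rewrite Nat.add_succ_r; change (fact (S (k + p))) with (S (k + p) * fact (k + p))%nat.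
  rewrite mult_INR, S_INR, plus_INR, S_INR; field; apply Rgt_not_eq, INR_fact_pos.
Qed.

Lemma rising_Sl p k : rising (S p) k = INR (S k) * rising p (S k).
Proof.
  unfold rising; rewrite Nat.add_succ_r, <- Nat.add_succ_l.
  change (fact (S k)) with (S k * fact k)%nat; rewrite mult_INR.
  field; split; [apply Rgt_not_eq, INR_fact_pos | apply not_0_INR; lia].
Qed.

Lemma rising_pos p k : 0 < rising p k.
Proof. apply Rdiv_lt_0_compat; apply INR_fact_pos. Qed.

Lemma rising_sub_prev p n : rising (S p) n - prev (rising (S p)) n = INR (S p) * rising p n.
Proof.
  destruct n as [|k]; simpl prev.
  - rewrite !rising_0_r; change (fact (S p)) with (S p * fact p)%nat; rewrite mult_INR; ring.
  - rewrite (rising_Sr p (S k)), (rising_Sl p k); ring.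
Qed.

Lemma pow_S_le_rising p k : INR (S k) ^ p <= rising p k.
Proof.
  induction p as [|p IH]; [rewrite rising_0_l; simpl; lra|].
  rewrite rising_Sr; change (INR (S k) ^ S p) with (INR (S k) * INR (S k) ^ p).
  apply Rmult_le_compat; [apply pos_INR | apply pow_le, pos_INR | | exact IH].
  rewrite !S_INR; pose proof (pos_INR p); lra.
Qed.

Lemma pow_le_rising p k : INR k ^ p <= rising p k.
Proof.
  eapply Rle_trans; [|apply pow_S_le_rising].
  apply pow_incr; split; [apply pos_INR | apply le_INR; lia].
Qed.

Lemma rising_sub_pow_le p :
  exists c, 0 <= c /\ forall k, rising (S p) k - INR k ^ S p <= c * rising p k.
Proof.
  induction p as [|p [c [Hc0 Hc]]].
  - exists 1; split; [lra|]; intros k; rewrite rising_Sr, !rising_0_l; simpl; lra.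
  - exists (c + INR (S (S p))); split; [pose proof (pos_INR (S (S p))); lra|]; intros k.
    rewrite (rising_Sr (S p)).
    replace ((INR k + INR (S (S p))) * rising (S p) k - INR k ^ S (S p))
      with (INR k * (rising (S p) k - INR k ^ S p) + INR (S (S p)) * rising (S p) k) by (simpl; ring).
    assert (H1 : INR k * (rising (S p) k - INR k ^ S p) <= INR k * (c * rising p k))
      by (apply Rmult_le_compat_l; [apply pos_INR | apply Hc]).
    assert (H2 : INR k * (c * rising p k) <= c * rising (S p) k).
    { rewrite rising_Sr; pose proof (pos_INR (S p)); pose proof (rising_pos p k).
      assert (0 <= c * INR (S p) * rising p k) by (apply Rmult_le_pos; [apply Rmult_le_pos|]; lra).
      nra. }
    lra.
Qed.

Lemma CV_radius_gt_of_disks (a : nat -> R) x :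
  (forall r, 0 <= r < 1 -> CV_disk a r) -> Rabs x < 1 -> Rbar_lt (Rabs x) (CV_radius a).
Proof.
  intros Hdisk Hx; pose proof (Rabs_pos x).
  apply Rbar_lt_le_trans with (Finite ((1 + Rabs x) / 2)); [simpl; lra|].
  unfold CV_radius; apply (proj1 (Lub_Rbar_correct (CV_disk a))), Hdisk; lra.
Qed.

Lemma ex_series_rising p x : Rabs x < 1 -> ex_series (fun n => rising p n * x ^ n).
Proof.
  intros Hx; apply ex_pseries_R, CV_radius_inside.
  rewrite (CV_radius_ext _ (PS_derive_n p (fun _ => 1)))
    by (intros n; unfold PS_derive_n, rising; ring).
  rewrite CV_radius_derive_n; apply CV_radius_gt_of_disks; [|exact Hx].
  intros r Hr; apply (ex_series_ext (fun n => r ^ n));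
    [|apply ex_series_geom; rewrite Rabs_pos_eq; lra].
  intros n; rewrite Rmult_1_l, Rabs_pos_eq; [reflexivity | apply pow_le; lra].
Qed.

Lemma CV_radius_rising_dominated (a : nat -> R) p x :
  (forall n, Rabs (a n) <= rising p n) -> Rabs x < 1 -> Rbar_lt (Rabs x) (CV_radius a).
Proof.
  intros Ha; apply CV_radius_gt_of_disks; intros r Hr.
  apply (ex_series_le_R _ (fun n => rising p n * r ^ n));
    [|apply ex_series_rising; rewrite Rabs_pos_eq; lra].
  intros n; rewrite Rabs_Rabsolu, Rabs_mult, (Rabs_pos_eq (r ^ n)) by (apply pow_le; lra).
  apply Rmult_le_compat_r; [apply pow_le; lra | apply Ha].
Qed.

Lemma is_series_rising p x : Rabs x < 1 ->
  is_series (fun n => rising p n * x ^ n) (INR (fact p) / (1 - x) ^ S p).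
Proof.
  intros Hx; assert (Hx1 : 0 < 1 - x) by (apply Rabs_def2 in Hx; lra).
  induction p as [|p IH].
  - apply (is_series_ext (fun n => x ^ n)); [intros n; rewrite rising_0_l; simpl; ring|].
    replace (INR (fact 0) / (1 - x) ^ 1) with (/ (1 - x)) by (simpl; field; lra).
    now apply is_series_geom.
  - assert (Hsum := is_series_sub_prev _ x (ex_series_rising (S p) x Hx)).
    apply (is_series_ext _ (fun n => INR (S p) * (rising p n * x ^ n))) in Hsum;
      [|intros n; rewrite rising_sub_prev; apply Rmult_assoc].
    assert (Hmul : (1 - x) * Series (fun n => rising (S p) n * x ^ n)
                   = INR (S p) * (INR (fact p) / (1 - x) ^ S p)).
    { rewrite <- (is_series_unique _ _ Hsum).
      apply is_series_unique, (is_series_scal_l (V := R_NormedModule)), IH. }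
    replace (INR (fact (S p)) / (1 - x) ^ S (S p)) with (Series (fun n => rising (S p) n * x ^ n)).
    + now apply Series_correct, ex_series_rising.
    + change (fact (S p)) with (S p * fact p)%nat; rewrite mult_INR.
      apply (Rmult_eq_reg_l (1 - x)); [|lra].
      rewrite Hmul; simpl; field; split; [apply pow_nonzero|]; lra.
Qed.

Lemma PSeries_partial_sums_le (c : nat -> R) p a b X : 0 <= X < 1 ->
  (forall n, Rabs (sum_n c n) <= a * rising (S p) n + b * rising p n) ->
  Rabs ((1 - X) ^ S p * PSeries c X) <= a * INR (fact (S p)) + b * INR (fact p) * (1 - X).
Proof.
  intros HX Hc; assert (HX1 : Rabs X < 1) by (rewrite Rabs_pos_eq; lra).
  set (bnd := fun n => a * (rising (S p) n * X ^ n) + b * (rising p n * X ^ n)).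
  assert (Hbnd : is_series bnd (a * (INR (fact (S p)) / (1 - X) ^ S (S p))
                                + b * (INR (fact p) / (1 - X) ^ S p))).
  { apply (is_series_plus (V := R_NormedModule)); apply (is_series_scal_l (V := R_NormedModule));
      now apply is_series_rising. }
  assert (Hle : forall n, Rabs (sum_n c n * X ^ n) <= bnd n).
  { intros n; rewrite Rabs_mult, (Rabs_pos_eq (X ^ n)) by (apply pow_le; lra).
    unfold bnd; rewrite <- !Rmult_assoc, <- Rmult_plus_distr_r.
    apply Rmult_le_compat_r; [apply pow_le; lra | apply Hc]. }
  assert (Hex : ex_series (fun n => sum_n c n * X ^ n))
    by (apply (ex_series_le_R _ bnd Hle); eexists; exact Hbnd).
  assert (Habel : PSeries c X = (1 - X) * Series (fun n => sum_n c n * X ^ n)).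
  { apply is_series_unique.
    apply (is_series_ext _ _ _ (fun n => f_equal (fun t => t * X ^ n) (sum_n_sub_prev c n))).
    now apply is_series_sub_prev. }
  assert (Hpow : 0 < (1 - X) ^ S (S p)) by (apply pow_lt; lra).
  rewrite Habel, <- Rmult_assoc, Rabs_mult, (Rabs_pos_eq (_ * _))
    by (apply Rmult_le_pos; [apply pow_le|]; lra).
  replace ((1 - X) ^ S p * (1 - X)) with ((1 - X) ^ S (S p)) by (simpl; ring).
  eapply Rle_trans;
    [apply Rmult_le_compat_l; [lra | apply (Rabs_Series_le _ bnd Hle); eexists; exact Hbnd]|].
  rewrite (is_series_unique _ _ Hbnd); right; simpl; field; split; [apply pow_nonzero|]; lra.
Qed.

(* The coefficient [/ INR k] vanishes at [k = 0] because [/ 0 = 0]. *)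
Lemma ln_series x : Rabs x < 1 -> - ln (1 - x) = Series (fun k => x ^ S k / INR (S k)).
Proof.
  intros Hx; set (a := fun k => / INR k).
  assert (Hrad : forall z, Rabs z < 1 -> Rbar_lt (Rabs z) (CV_radius a)).
  { intros z Hz; apply (CV_radius_rising_dominated _ 0); [|exact Hz].
    intros [|n]; rewrite rising_0_l; unfold a.
    - change (INR 0) with 0; rewrite Rinv_0, Rabs_R0; lra.
    - rewrite Rabs_pos_eq, <- Rinv_1 by (left; apply Rinv_0_lt_compat, lt_0_INR; lia).
      apply Rinv_le_contravar; [lra | rewrite S_INR; pose proof (pos_INR n); lra]. }
  set (g := fun z => - ln (1 - z) - PSeries a z).
  assert (Hg : forall z, Rabs (z - 0) <= Rabs x -> is_derive g z 0).
  { intros z Hz; rewrite Rminus_0_r in Hz; assert (Hz1 : Rabs z < 1) by lra.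
    assert (Hz' : -1 < z < 1) by (apply Rabs_def2 in Hz1; lra).
    assert (Hgeom : PSeries (PS_derive a) z = / (1 - z)).
    { rewrite <- (is_series_unique _ _ (is_series_geom z Hz1)); apply Series_ext; intros n.
      unfold PS_derive, a; field; apply not_0_INR; lia. }
    replace 0 with (/ (1 - z) - PSeries (PS_derive a) z) by (rewrite Hgeom; ring).
    apply (is_derive_minus (V := R_NormedModule) (fun z => - ln (1 - z))).
    - auto_derive; [lra | field; lra].
    - now apply is_derive_PSeries, Hrad. }
  assert (Hconst := MVT_Rabs_le g (fun _ => 0) 0 x 0 Hg (fun z _ => Req_le _ _ Rabs_R0)).
  rewrite Rmult_0_l, Rplus_0_l in Hconst.
  assert (Hg0 : g 0 = 0).
  { unfold g, a; rewrite PSeries_0, Rminus_0_r, ln_1; change (INR 0) with 0.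
    rewrite Rinv_0; ring. }
  rewrite Hg0, Rminus_0_r in Hconst.
  assert (Hgx : g x = 0) by (apply Rabs_eq_0; pose proof (Rabs_pos (g x)); lra).
  unfold g in Hgx; apply Rminus_diag_uniq in Hgx; rewrite Hgx.
  unfold PSeries; rewrite Series_incr_1_aux by (unfold a; change (INR 0) with 0; rewrite Rinv_0; ring).
  apply Series_ext; intros k; unfold a, Rdiv; ring.
Qed.

(** * The series of [F_A] and of its derivatives *)

Lemma exp_pow_INR x n : exp x ^ n = exp (INR n * x).
Proof.
  induction n as [|n IH]; [simpl; now rewrite Rmult_0_l, exp_0|].
  rewrite <- tech_pow_Rmult, IH, <- exp_plus, S_INR; f_equal; ring.
Qed.

Lemma exp_le_compat x y : x <= y -> exp x <= exp y.
Proof. intros [Hlt | ->]; [left; now apply exp_increasing | apply Rle_refl]. Qed.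

Lemma exp_lt_1 t : t < 0 -> 0 < exp t < 1.
Proof. intros Ht; split; [apply exp_pos | rewrite <- exp_0; now apply exp_increasing]. Qed.

Lemma Rabs_exp_lt_1 t : t < 0 -> Rabs (exp t) < 1.
Proof. intros Ht; destruct (exp_lt_1 t Ht); rewrite Rabs_pos_eq; lra. Qed.

Lemma exp_opp_ratio_bounds t : 0 < t -> 0 < 1 - exp (- t) /\ 1 <= t / (1 - exp (- t)) <= 1 + t.
Proof.
  intros Ht.
  assert (Hlo : t / (1 + t) <= 1 - exp (- t)).
  { rewrite exp_Ropp; apply Rle_trans with (1 - / (1 + t)); [right; field; lra|].
    assert (/ exp t <= / (1 + t)) by (apply Rinv_le_contravar; [lra | apply exp_ineq1_le]); lra. }
  assert (Hhi : 1 - exp (- t) <= t) by (pose proof (exp_ineq1_le (- t)); lra).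
  assert (Hu : 0 < 1 - exp (- t)) by (eapply Rlt_le_trans; [|exact Hlo]; apply Rdiv_lt_0_compat; lra).
  split; [exact Hu|]; split.
  - apply (Rmult_le_reg_r _ _ _ Hu); unfold Rdiv; rewrite Rmult_assoc, Rinv_l; lra.
  - apply (Rmult_le_reg_r _ _ _ Hu); unfold Rdiv; rewrite Rmult_assoc, Rinv_l, Rmult_1_r by lra.
    apply (Rmult_le_compat_l (1 + t)) in Hlo; [|lra].
    replace ((1 + t) * (t / (1 + t))) with t in Hlo by (field; lra); exact Hlo.
Qed.

Definition indic (A : nat -> bool) (j : nat) : R := if A j then 1 else 0.

Definition coef (A : nat -> bool) (m j : nat) : R := indic A j * INR j ^ m.

Definition gen (A : nat -> bool) (m : nat) (X : R) : R := PSeries (coef A m) X.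

(* Expanding [- ln (1 - e^(s j))] gives [F_A^(m) y = sum_(k >= 1) k^(m-1) gen A m (e^(k y))]. *)
Definition Fterm (A : nat -> bool) (m k : nat) (y : R) : R :=
  INR (S k) ^ m / INR (S k) * gen A m (exp (INR (S k) * y)).

Definition Fser (A : nat -> bool) (m : nat) (y : R) : R := Series (fun k => Fterm A m k y).

Lemma indic_bounds A j : 0 <= indic A j <= 1.
Proof. unfold indic; destruct (A j); lra. Qed.

Lemma coef_nonneg A m j : 0 <= coef A m j.
Proof. apply Rmult_le_pos; [apply indic_bounds | apply pow_le, pos_INR]. Qed.

Lemma coef_le_pow A m j : coef A m j <= INR j ^ m.
Proof.
  unfold coef; pose proof (indic_bounds A j); pose proof (pow_le (INR j) m (pos_INR j)); nra.
Qed.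

Lemma coef_0 A m : A 0%nat = false -> coef A m 0 = 0.
Proof. intros HA; unfold coef, indic; rewrite HA; ring. Qed.

Lemma CV_radius_coef A m X : Rabs X < 1 -> Rbar_lt (Rabs X) (CV_radius (coef A m)).
Proof.
  apply (CV_radius_rising_dominated _ m); intros n.
  rewrite Rabs_pos_eq by apply coef_nonneg.
  eapply Rle_trans; [apply coef_le_pow | apply pow_le_rising].
Qed.

Lemma ex_series_coef A m X : Rabs X < 1 -> ex_series (fun j => coef A m j * X ^ j).
Proof. intros HX; now apply ex_pseries_R, CV_radius_inside, CV_radius_coef. Qed.

Lemma gen_nonneg A m X : 0 <= X < 1 -> 0 <= gen A m X.
Proof.
  intros HX; apply Series_nonneg; [|apply ex_series_coef; rewrite Rabs_pos_eq; lra].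
  intros j; apply Rmult_le_pos; [apply coef_nonneg | apply pow_le; lra].
Qed.

Lemma gen_le A m X : A 0%nat = false -> 0 <= X < 1 ->
  gen A m X <= X * (INR (fact m) / (1 - X) ^ S m).
Proof.
  intros HA HX; assert (HX1 : Rabs X < 1) by (rewrite Rabs_pos_eq; lra).
  unfold gen; rewrite PSeries_decr_1_aux by now apply coef_0.
  apply Rmult_le_compat_l; [lra|].
  rewrite <- (is_series_unique _ _ (is_series_rising m X HX1)).
  apply Series_le; [intros n; unfold PS_decr_1; split | now apply ex_series_rising].
  - apply Rmult_le_pos; [apply coef_nonneg | apply pow_le; lra].
  - apply Rmult_le_compat_r; [apply pow_le; lra|].
    eapply Rle_trans; [apply coef_le_pow | apply pow_S_le_rising].
Qed.

Lemma mul_PSeries_derive_coef A m X : X * PSeries (PS_derive (coef A m)) X = gen A (S m) X.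
Proof.
  assert (E : forall n, @eq R (PS_incr_1 (PS_derive (coef A m)) n) (coef A (S m) n)).
  { intros [|n]; unfold PS_incr_1, PS_derive, coef.
    - simpl; rewrite Rmult_0_l, Rmult_0_r; reflexivity.
    - rewrite <- tech_pow_Rmult; ring. }
  rewrite <- PSeries_incr_1; apply PSeries_ext; exact E.
Qed.

Lemma Fterm_bound A m k y y0 : A 0%nat = false -> y <= y0 -> y0 < 0 ->
  0 <= Fterm A m k y <= INR (fact m) / (1 - exp y0) ^ S m * (rising m k * exp y0 ^ k).
Proof.
  intros HA Hy Hy0; set (q := exp y0); set (X := exp (INR (S k) * y)).
  assert (Hk : 1 <= INR (S k)) by (rewrite S_INR; pose proof (pos_INR k); lra).
  assert (Hq : 0 < q < 1) by now apply exp_lt_1.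
  assert (HXq : 0 < X <= q * q ^ k).
  { split; [apply exp_pos|]; unfold X, q; rewrite tech_pow_Rmult, exp_pow_INR.
    apply exp_le_compat, Rmult_le_compat_l; [apply pos_INR | exact Hy]. }
  assert (Hqk : 0 < q ^ k <= 1).
  { split; [apply pow_lt; lra | rewrite <- (pow1 k); apply pow_incr; lra]. }
  assert (HX : 0 <= X < 1) by nra.
  assert (Hbeta : 0 <= INR (S k) ^ m / INR (S k) <= rising m k).
  { assert (Hpow : 0 <= INR (S k) ^ m) by (apply pow_le; lra).
    split; [apply Rdiv_le_0_compat; lra|].
    apply Rle_trans with (INR (S k) ^ m); [|apply pow_S_le_rising].
    apply (Rmult_le_reg_r (INR (S k))); [lra|]; unfold Rdiv.
    rewrite Rmult_assoc, Rinv_l by lra; nra. }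
  assert (Hgen : gen A m X <= q ^ k * (INR (fact m) / (1 - q) ^ S m)).
  { eapply Rle_trans; [now apply gen_le|].
    assert (Hf := INR_fact_pos m).
    apply Rmult_le_compat; [lra | apply Rdiv_le_0_compat; [lra | apply pow_lt; lra] | nra|].
    apply Rmult_le_compat_l; [lra|].
    apply Rinv_le_contravar; [apply pow_lt; lra | apply pow_incr; nra]. }
  assert (Hgen0 := gen_nonneg A m X HX).
  unfold Fterm; fold X; split; [now apply Rmult_le_pos|].
  replace (_ * (rising m k * q ^ k))
    with (rising m k * (q ^ k * (INR (fact m) / (1 - q) ^ S m))) by ring.
  apply Rmult_le_compat; lra.
Qed.

Lemma ex_series_Fterm A m y : A 0%nat = false -> y < 0 -> ex_series (fun k => Fterm A m k y).
Proof.
  intros HA Hy.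
  apply (ex_series_le_R _ (fun k => INR (fact m) / (1 - exp y) ^ S m * (rising m k * exp y ^ k))).
  - intros k; destruct (Fterm_bound A m k y y HA (Rle_refl y) Hy); rewrite Rabs_pos_eq; lra.
  - apply (ex_series_scal_l (V := R_NormedModule)), ex_series_rising.
    apply Rabs_exp_lt_1; lra.
Qed.

Lemma is_derive_Fterm A m k z : z < 0 -> is_derive (Fterm A m k) z (Fterm A (S m) k z).
Proof.
  intros Hz; set (c := INR (S k)).
  assert (Hc : 0 < c) by (apply lt_0_INR; lia).
  assert (HX : Rabs (exp (c * z)) < 1) by (apply Rabs_exp_lt_1; nra).
  assert (Hin : is_derive (fun y => exp (c * y)) z (c * exp (c * z))) by (auto_derive; [easy | ring]).
  assert (Hgen := is_derive_comp (PSeries (coef A m)) (fun y => exp (c * y)) z _ _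
                    (is_derive_PSeries _ _ (CV_radius_coef A m _ HX)) Hin).
  unfold Fterm; fold c; set (X := exp (c * z)) in *.
  replace (c ^ S m / c * gen A (S m) X) with (c ^ m / c * (c * X * PSeries (PS_derive (coef A m)) X)).
  - exact (is_derive_scal _ _ _ _ Hgen).
  - rewrite Rmult_assoc, mul_PSeries_derive_coef, <- tech_pow_Rmult; unfold Rdiv; ring.
Qed.

Lemma is_derive_Fser A m y : A 0%nat = false -> y < 0 -> is_derive (Fser A m) y (Fser A (S m) y).
Proof.
  intros HA Hy; unfold Fser.
  apply (is_derive_Series (Fterm A m) (Fterm A (S m))
           (fun k => INR (fact (S m)) / (1 - exp (y / 2)) ^ S (S m)
                     * (rising (S m) k * exp (y / 2) ^ k))
           y (- y / 2)); [lra | intros n z Hz; apply Rabs_def2 in Hz .. | | ].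
  - apply is_derive_Fterm; lra.
  - destruct (Fterm_bound A (S m) n z (y / 2) HA ltac:(lra) ltac:(lra)); rewrite Rabs_pos_eq; lra.
  - apply (ex_series_scal_l (V := R_NormedModule)), ex_series_rising.
    apply Rabs_exp_lt_1; lra.
  - intros z Hz; apply Rabs_def2 in Hz; apply ex_series_Fterm; [exact HA | lra].
Qed.

Lemma F_A_Fser A y : A 0%nat = false -> y < 0 -> F_A A y = Fser A 0 y.
Proof.
  intros HA Hy.
  set (t := fun j k => coef A 0 j * exp (INR (S k) * y) ^ j / INR (S k)).
  assert (HX : forall k, Rabs (exp (INR (S k) * y)) < 1).
  { intros k; apply Rabs_exp_lt_1; assert (0 < INR (S k)) by (apply lt_0_INR; lia); nra. }
  assert (Hcol : forall k, Series (fun j => t j k) = Fterm A 0 k y).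
  { intros k; unfold t, Fterm, gen, PSeries, Rdiv; rewrite Series_scal_r, pow_O; ring. }
  assert (Hcolex : forall k, ex_series (fun j => t j k)).
  { intros k; apply ex_series_scal_r, ex_series_coef, HX. }
  unfold Fser, F_A; rewrite <- (Series_ext _ _ Hcol), <- Series_Series_comm; [| | exact Hcolex |].
  - rewrite <- Series_opp; apply Series_ext; intros j; unfold t, Rdiv.
    rewrite (Series_ext _ (fun k => coef A 0 j * (exp (INR (S k) * y) ^ j / INR (S k))))
      by (intros k; unfold Rdiv; ring).
    rewrite Series_scal_l.
    unfold coef, indic; destruct (A j) eqn:Hj; [|ring].
    assert (Hj0 : 0 < INR j) by (apply lt_0_INR; destruct j; [congruence | lia]).
    rewrite Rmult_1_l, pow_O, Rmult_1_l, ln_series.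
    + apply Series_ext; intros k; rewrite !exp_pow_INR; do 2 f_equal; ring.
    + apply Rabs_exp_lt_1; nra.
  - intros j k; unfold t; apply Rdiv_le_0_compat; [|apply lt_0_INR; lia].
    apply Rmult_le_pos; [apply coef_nonneg | apply pow_le; left; apply exp_pos].
  - apply (ex_series_ext _ _ (fun k => eq_sym (Hcol k))), ex_series_Fterm; assumption.
Qed.

Lemma Derive_n_F_A A m y : A 0%nat = false -> y < 0 -> Derive_n (F_A A) m y = Fser A m y.
Proof.
  intros HA; revert y; induction m as [|m IH]; intros y Hy.
  - simpl; now apply F_A_Fser.
  - simpl; rewrite (Derive_ext_loc _ (Fser A m)).
    + apply is_derive_unique, is_derive_Fser; assumption.
    + apply (filter_imp (fun t => t < 0)); [intros t Ht; now apply IH | now apply open_lt].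
Qed.

(** * The Abelian theorem *)

Definition posnat (j : nat) : bool := negb (j =? 0)%nat.

Lemma indic_posnat_S j : indic posnat (S j) = 1.
Proof. reflexivity. Qed.

Lemma sum_n_indic_bounds A n : A 0%nat = false -> 0 <= sum_n (indic A) n <= INR n.
Proof.
  intros HA; induction n as [|n IH].
  - rewrite sum_O; unfold indic; rewrite HA; simpl; lra.
  - rewrite sum_n_Sn_R, S_INR; pose proof (indic_bounds A (S n)); lra.
Qed.

Lemma sum_n_density_error A d n : A 0%nat = false ->
  sum_n (indic A) n - d * INR n = sum_n (fun j => indic A j - d * indic posnat j) n.
Proof.
  intros HA; induction n as [|n IH].
  - rewrite !sum_O; unfold indic; rewrite HA; simpl; ring.
  - rewrite !sum_n_Sn_R, <- IH, indic_posnat_S, S_INR; ring.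
Qed.

Lemma countA_sum_n A n : A 0%nat = false -> countA A n = sum_n (indic A) n.
Proof.
  intros HA; unfold countA, sum_n; rewrite (sum_Sn_m (indic A) 0 n) by lia.
  unfold indic at 1; rewrite HA; symmetry; apply Rplus_0_l.
Qed.

Lemma density_error_le A d : A 0%nat = false -> has_density A d -> forall eps, 0 < eps ->
  exists K, 0 <= K /\ forall n, Rabs (sum_n (indic A) n - d * INR n) <= eps * INR n + K.
Proof.
  intros HA Hd eps Heps.
  destruct (proj2 (is_lim_seq_spec _ _) Hd (mkposreal eps Heps)) as [N HN]; simpl in HN.
  assert (Hd0 := Rabs_pos d); assert (HN0 := pos_INR N).
  exists ((1 + Rabs d) * INR N); split; [nra|]; intros n.
  assert (Hn0 := pos_INR n); assert (Hsum := sum_n_indic_bounds A n HA).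
  destruct (Compare_dec.le_lt_dec N n) as [HNn | HnN].
  - specialize (HN n HNn); rewrite countA_sum_n in HN by exact HA.
    destruct (Req_dec (INR n) 0) as [Hz | Hz].
    + rewrite Hz in Hsum |- *; replace (sum_n (indic A) n) with 0 by lra.
      rewrite Rmult_0_r, Rminus_0_r, Rabs_R0; nra.
    + replace (sum_n (indic A) n - d * INR n) with (INR n * (sum_n (indic A) n / INR n - d))
        by (field; exact Hz).
      rewrite Rabs_mult, Rabs_pos_eq by exact Hn0.
      assert (INR n * Rabs (sum_n (indic A) n / INR n - d) <= INR n * eps)
        by (apply Rmult_le_compat_l; lra).
      nra.
  - assert (INR n <= INR N) by (apply le_INR; lia).
    unfold Rminus; eapply Rle_trans; [apply Rabs_triang|].
    rewrite Rabs_Ropp, Rabs_mult, (Rabs_pos_eq (INR n)), Rabs_pos_eq by lra.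
    assert (Rabs d * INR n <= Rabs d * INR N) by (apply Rmult_le_compat_l; lra).
    assert (0 <= eps * INR n) by nra.
    nra.
Qed.

(* Summation by parts against the density error [#(A ∩ [1,n]) - d n]. *)
Lemma gen_sub_density_le A d m : A 0%nat = false -> has_density A d -> forall eps, 0 < eps ->
  exists K, forall X, 0 <= X < 1 ->
  Rabs ((1 - X) ^ S m * (gen A m X - d * gen posnat m X)) <= eps + K * (1 - X).
Proof.
  intros HA Hd eps Heps.
  assert (Hf := INR_fact_pos (S m)).
  set (e := eps / (2 * INR (fact (S m)))).
  assert (He : 0 < e) by (apply Rdiv_lt_0_compat; lra).
  destruct (density_error_le A d HA Hd e He) as [K [HK Herr]].
  exists (2 * K * INR (fact m)); intros X HX.
  set (c := fun j => coef A m j - d * coef posnat m j).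
  assert (Hc : forall n, Rabs (sum_n c n) <= 2 * e * rising (S m) n + 2 * K * rising m n).
  { intros n.
    rewrite (sum_n_ext _ (fun j => (indic A j - d * indic posnat j) * INR j ^ m))
      by (intros j; unfold c, coef; simpl; ring).
    eapply Rle_trans; [apply (sum_n_mul_nondecr_le _ _ (e * INR n + K))|].
    - intros j; apply pow_le, pos_INR.
    - intros j; apply pow_incr; split; [apply pos_INR | apply le_INR; lia].
    - intros j Hj; rewrite <- sum_n_density_error by exact HA.
      eapply Rle_trans; [apply Herr|].
      assert (INR j <= INR n) by (apply le_INR; lia); nra.
    - cbv beta; pose proof (pow_le_rising (S m) n); pose proof (pow_le_rising m n).
      replace (2 * (e * INR n + K) * INR n ^ m)
        with (2 * e * INR n ^ S m + 2 * K * INR n ^ m) by (simpl; ring).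
      apply Rplus_le_compat; apply Rmult_le_compat_l; lra. }
  replace (gen A m X - d * gen posnat m X) with (PSeries c X).
  - eapply Rle_trans; [apply (PSeries_partial_sums_le c m _ _ X HX Hc)|].
    right; unfold e; field; lra.
  - assert (HX1 : Rabs X < 1) by (rewrite Rabs_pos_eq; lra).
    unfold gen, PSeries; rewrite <- Series_scal_l, <- Series_minus.
    + apply Series_ext; intros j; unfold c; ring.
    + now apply ex_series_coef.
    + now apply (ex_series_scal_l (V := R_NormedModule)), ex_series_coef.
Qed.

Lemma gen_posnat_0 X : 0 <= X < 1 -> gen posnat 0 X = X / (1 - X).
Proof.
  intros HX; unfold gen; rewrite PSeries_decr_1_aux by now apply coef_0.
  unfold Rdiv; rewrite <- (is_series_unique _ _ (is_series_geom X ltac:(rewrite Rabs_pos_eq; lra))).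
  f_equal; apply Series_ext; intros n; unfold PS_decr_1, coef; rewrite indic_posnat_S; ring.
Qed.

(* For [m = p + 1] compare the coefficients [n^m] with [rising m n], whose series is explicit. *)
Lemma gen_posnat_S_le p : exists K, forall X, 0 <= X < 1 ->
  Rabs ((1 - X) ^ S (S p) * gen posnat (S p) X - INR (fact (S p))) <= K * (1 - X).
Proof.
  destruct (rising_sub_pow_le p) as [c [Hc0 Hc]].
  exists (c * INR (fact p)); intros X HX.
  assert (HX1 : Rabs X < 1) by (rewrite Rabs_pos_eq; lra).
  assert (Hpow : 0 < (1 - X) ^ S p) by (apply pow_lt; lra).
  assert (Hterm : forall n, 0 <= (rising (S p) n - INR n ^ S p) * X ^ n <= c * (rising p n * X ^ n)).
  { intros n; assert (0 <= X ^ n) by (apply pow_le; lra); pose proof (pow_le_rising (S p) n).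
    rewrite <- Rmult_assoc; split; [apply Rmult_le_pos; lra|].
    apply Rmult_le_compat_r; [lra | apply Hc]. }
  assert (Hbex : ex_series (fun n => c * (rising p n * X ^ n)))
    by now apply (ex_series_scal_l (V := R_NormedModule)), ex_series_rising.
  assert (Hex := ex_series_le_nonneg _ _ Hterm Hbex).
  set (defect := Series (fun n => (rising (S p) n - INR n ^ S p) * X ^ n)) in *.
  assert (Hdef : 0 <= defect <= c * (INR (fact p) / (1 - X) ^ S p)).
  { split; [apply Series_nonneg; [intros n; apply Hterm | exact Hex]|].
    rewrite <- (is_series_unique _ _ (is_series_rising p X HX1)), <- Series_scal_l.
    apply Series_le; [exact Hterm | exact Hbex]. }
  assert (Hgen : gen posnat (S p) X = INR (fact (S p)) / (1 - X) ^ S (S p) - defect).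
  { rewrite <- (is_series_unique _ _ (is_series_rising (S p) X HX1)).
    unfold defect, gen, PSeries; rewrite <- Series_minus by (apply ex_series_rising, HX1 || exact Hex).
    apply Series_ext; intros n.
    replace (coef posnat (S p) n) with (INR n ^ S p) by (destruct n; unfold coef, indic; simpl; ring).
    ring. }
  rewrite Hgen.
  replace ((1 - X) ^ S (S p) * (INR (fact (S p)) / (1 - X) ^ S (S p) - defect) - INR (fact (S p)))
    with (- ((1 - X) ^ S (S p) * defect)) by (field; apply pow_nonzero; lra).
  rewrite Rabs_Ropp, Rabs_pos_eq by (apply Rmult_le_pos; [apply pow_le; lra | apply Hdef]).
  apply Rle_trans with ((1 - X) ^ S (S p) * (c * (INR (fact p) / (1 - X) ^ S p))).
  - apply Rmult_le_compat_l; [apply pow_le; lra | apply Hdef].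
  - right; change ((1 - X) ^ S (S p)) with ((1 - X) * (1 - X) ^ S p); field; lra.
Qed.

Lemma gen_posnat_le m : exists K, forall X, 0 <= X < 1 ->
  Rabs ((1 - X) ^ S m * gen posnat m X - INR (fact m)) <= K * (1 - X).
Proof.
  destruct m as [|p]; [|apply gen_posnat_S_le].
  exists 1; intros X HX; rewrite gen_posnat_0 by exact HX.
  replace ((1 - X) ^ 1 * (X / (1 - X)) - INR (fact 0)) with (- (1 - X)) by (simpl; field; lra).
  rewrite Rabs_Ropp, Rabs_pos_eq; lra.
Qed.

Lemma filterlim_at_left_1_of_le (f : R -> R) l :
  (forall eps, 0 < eps -> exists K, forall X, 0 <= X < 1 -> Rabs (f X - l) <= eps + K * (1 - X)) ->
  filterlim f (at_left 1) (locally l).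
Proof.
  intros Hf; apply filterlim_locally; intros eps.
  assert (Heps := cond_pos eps).
  destruct (Hf (eps / 2) ltac:(lra)) as [K HK].
  assert (Hdel : 0 < Rmin 1 (eps / (2 * (Rabs K + 1)))).
  { apply Rmin_pos; [lra | apply Rdiv_lt_0_compat; [lra | pose proof (Rabs_pos K); lra]]. }
  exists (mkposreal _ Hdel); intros X HX HX1.
  change (Rabs (X - 1) < Rmin 1 (eps / (2 * (Rabs K + 1)))) in HX.
  change (Rabs (f X - l) < eps).
  rewrite Rabs_minus_sym, Rabs_pos_eq in HX by lra.
  assert (HXK : (1 - X) * (2 * (Rabs K + 1)) < eps).
  { apply (Rmult_lt_compat_r (2 * (Rabs K + 1))) in HX; [|pose proof (Rabs_pos K); lra].
    eapply Rlt_le_trans; [exact HX|].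
    eapply Rle_trans; [apply Rmult_le_compat_r; [pose proof (Rabs_pos K); lra | apply Rmin_r]|].
    right; field; pose proof (Rabs_pos K); lra. }
  assert (Hmin := Rmin_l 1 (eps / (2 * (Rabs K + 1)))).
  specialize (HK X ltac:(lra)).
  assert (K * (1 - X) <= Rabs K * (1 - X)) by (apply Rmult_le_compat_r; [lra | apply Rle_abs]).
  pose proof (Rabs_pos K); nra.
Qed.

Theorem gen_abel A d m : A 0%nat = false -> has_density A d ->
  filterlim (fun X => (1 - X) ^ S m * gen A m X) (at_left 1) (locally (d * INR (fact m))).
Proof.
  intros HA Hd; apply filterlim_at_left_1_of_le; intros eps Heps.
  destruct (gen_sub_density_le A d m HA Hd eps Heps) as [K1 HK1].
  destruct (gen_posnat_le m) as [K2 HK2].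
  exists (K1 + Rabs d * K2); intros X HX.
  specialize (HK1 X HX); specialize (HK2 X HX).
  replace ((1 - X) ^ S m * gen A m X - d * INR (fact m))
    with ((1 - X) ^ S m * (gen A m X - d * gen posnat m X)
          + d * ((1 - X) ^ S m * gen posnat m X - INR (fact m))) by ring.
  eapply Rle_trans; [apply Rabs_triang|]; rewrite (Rabs_mult d).
  assert (Rabs d * Rabs ((1 - X) ^ S m * gen posnat m X - INR (fact m)) <= Rabs d * (K2 * (1 - X)))
    by (apply Rmult_le_compat_l; [apply Rabs_pos | exact HK2]).
  lra.
Qed.

(** * The scaling limit *)

Lemma at_right_forall (a : R) (P : R -> Prop) : (forall t, a < t -> P t) -> at_right a P.
Proof. intros HP; exists (mkposreal 1 Rlt_0_1); intros t _; apply HP. Qed.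

Lemma filterlim_within_of {T} {F : (T -> Prop) -> Prop} {FF : Filter F}
  (f : T -> R) (D : R -> Prop) l :
  filterlim f F (locally l) -> F (fun x => D (f x)) -> filterlim f F (within D (locally l)).
Proof.
  intros Hf HD P HP; change (F (fun x => P (f x))).
  apply (filter_imp (fun x => D (f x) /\ (D (f x) -> P (f x)))); [tauto|].
  apply filter_and; [exact HD | exact (Hf _ HP)].
Qed.

Lemma filterlim_at_right_of_ex_derive (f : R -> R) a :
  ex_derive f a -> filterlim f (at_right a) (locally (f a)).
Proof.
  intros Hf; apply (filterlim_filter_le_1 (G := at_right a) (F := locally a)).
  - apply filter_le_within.
  - exact (ex_derive_continuous f a Hf).
Qed.

Lemma filterlim_exp_opp_at_right_0 : filterlim (fun t => exp (- t)) (at_right 0) (at_left 1).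
Proof.
  apply filterlim_within_of.
  - replace 1 with (exp (- 0)) by (rewrite Ropp_0; apply exp_0).
    apply (filterlim_at_right_of_ex_derive (fun t => exp (- t)) 0); auto_derive; easy.
  - apply at_right_forall; intros t Ht; apply exp_lt_1; lra.
Qed.

Lemma filterlim_scal_at_right_0 c : 0 < c -> filterlim (fun s => c * s) (at_right 0) (at_right 0).
Proof.
  intros Hc; apply filterlim_within_of.
  - replace 0 with (c * 0) at 2 by ring.
    apply (filterlim_at_right_of_ex_derive (fun s => c * s) 0); auto_derive; easy.
  - apply at_right_forall; intros t Ht; nra.
Qed.

Definition tgen (A : nat -> bool) (m : nat) (t : R) : R := t ^ S m * gen A m (exp (- t)).

Lemma tgen_bounds A m t : A 0%nat = false -> 0 < t ->
  0 <= tgen A m t <= INR (fact m) * INR (S m) ^ S m.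
Proof.
  intros HA Ht; set (X := exp (- t)); set (u := 1 - X).
  assert (HX : 0 < X < 1) by (apply exp_lt_1; lra).
  destruct (exp_opp_ratio_bounds t Ht) as [Hu0 [_ Hratio]]; fold X u in Hu0, Hratio.
  assert (Hf := INR_fact_pos m).
  assert (Hm : 1 <= INR (S m)) by (rewrite S_INR; pose proof (pos_INR m); lra).
  assert (Hgen := gen_le A m X HA ltac:(lra)); fold u in Hgen.
  assert (Hgen0 := gen_nonneg A m X ltac:(lra)).
  unfold tgen; fold X; split; [apply Rmult_le_pos; [apply pow_le|]; lra|].
  assert (Hexp : (1 + t) ^ S m <= INR (S m) ^ S m * / X).
  { unfold X; rewrite exp_Ropp, Rinv_inv.
    replace (exp t) with (exp (t / INR (S m)) ^ S m) by (rewrite exp_pow_INR; f_equal; field; lra).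
    rewrite <- Rpow_mult_distr; apply pow_incr; split; [lra|].
    pose proof (exp_ineq1_le (t / INR (S m))).
    apply Rle_trans with (INR (S m) * (1 + t / INR (S m))); [|apply Rmult_le_compat_l; lra].
    replace (INR (S m) * (1 + t / INR (S m))) with (INR (S m) + t) by (field; lra); lra. }
  apply Rle_trans with (t ^ S m * (X * (INR (fact m) / u ^ S m)));
    [apply Rmult_le_compat_l; [apply pow_le|]; lra|].
  replace (t ^ S m * (X * (INR (fact m) / u ^ S m))) with (INR (fact m) * (X * (t / u) ^ S m))
    by (unfold Rdiv; rewrite Rpow_mult_distr, pow_inv; field; apply pow_nonzero; lra).
  apply Rmult_le_compat_l; [lra|].
  apply Rle_trans with (X * (1 + t) ^ S m).
  - apply Rmult_le_compat_l; [lra | apply pow_incr; split; [apply Rdiv_le_0_compat|]; lra].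
  - apply (Rmult_le_compat_l X) in Hexp; [|lra].
    rewrite (Rmult_comm (INR (S m) ^ S m)), <- Rmult_assoc, Rinv_r, Rmult_1_l in Hexp by lra.
    exact Hexp.
Qed.

Lemma filterlim_ratio_pow m :
  filterlim (fun t => (t / (1 - exp (- t))) ^ S m) (at_right 0) (locally 1).
Proof.
  apply (filterlim_le_le (fun _ => 1) _ (fun t => (1 + t) ^ S m) (Finite 1)).
  - apply at_right_forall; intros t Ht.
    destruct (exp_opp_ratio_bounds t Ht) as [_ [H1 H2]].
    split; [apply pow_R1_Rle, H1 | apply pow_incr; lra].
  - apply filterlim_const.
  - replace (Rbar_locally 1) with (locally ((1 + 0) ^ S m)) by (rewrite Rplus_0_r, pow1; reflexivity).
    apply (filterlim_at_right_of_ex_derive (fun t => (1 + t) ^ S m) 0); auto_derive; easy.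
Qed.

Lemma tgen_lim A d m : A 0%nat = false -> has_density A d ->
  filterlim (tgen A m) (at_right 0) (locally (d * INR (fact m))).
Proof.
  intros HA Hd.
  apply (filterlim_ext_loc (fun t => (t / (1 - exp (- t))) ^ S m
                                     * ((1 - exp (- t)) ^ S m * gen A m (exp (- t))))).
  - apply at_right_forall; intros t Ht; unfold tgen.
    assert (Hu := proj1 (exp_opp_ratio_bounds t Ht)).
    unfold Rdiv; rewrite Rpow_mult_distr, pow_inv; field; apply pow_nonzero; lra.
  - replace (d * INR (fact m)) with (1 * (d * INR (fact m))) by ring.
    eapply (filterlim_comp_2 _ _ Rmult).
    + apply filterlim_ratio_pow.
    + apply (filterlim_comp _ _ _ (fun t => exp (- t)) (fun X => (1 - X) ^ S m * gen A m X)
               _ (at_left 1)).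
      * apply filterlim_exp_opp_at_right_0.
      * exact (gen_abel A d m HA Hd).
    + apply (filterlim_mult (K := R_AbsRing)).
Qed.

Lemma zeta_2_Series : zeta 2 = Series (fun k => / INR (S k) ^ 2).
Proof.
  apply Series_ext; intros k; f_equal.
  replace 2 with (INR 2) at 1 by (simpl; ring); apply Rpower_pow, lt_0_INR; lia.
Qed.

Lemma sum_n_inv_sqr_le n : sum_n (fun k => / INR (S k) ^ 2) n <= 2 - 2 / (INR n + 2).
Proof.
  induction n as [|n IH]; [rewrite sum_O; simpl; lra|].
  rewrite sum_n_Sn_R, !S_INR; set (x := INR n) in *; assert (Hx : 0 <= x) by apply pos_INR.
  replace (x + 1 + 1) with (x + 2) by ring; replace (x + 1 + 2) with (x + 3) by ring.
  assert (Hstep : / (x + 2) ^ 2 <= 2 / (x + 2) - 2 / (x + 3)).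
  { replace (2 / (x + 2) - 2 / (x + 3)) with (/ ((x + 2) * (x + 3) / 2)) by (field; lra).
    apply Rinv_le_contravar; [apply Rdiv_lt_0_compat; nra | simpl; nra]. }
  lra.
Qed.

Lemma inv_sqr_pos k : 0 < / INR (S k) ^ 2.
Proof. apply Rinv_0_lt_compat, pow_lt, lt_0_INR; lia. Qed.

Lemma ex_series_inv_sqr : ex_series (fun k => / INR (S k) ^ 2).
Proof.
  apply (ex_series_nonneg_bounded _ (fun k => Rlt_le _ _ (inv_sqr_pos k)) 2).
  intros n; eapply Rle_trans; [apply sum_n_inv_sqr_le|].
  assert (0 < 2 / (INR n + 2)) by (apply Rdiv_lt_0_compat; pose proof (pos_INR n); lra); lra.
Qed.

Lemma zeta_2_pos : 0 < zeta 2.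
Proof.
  rewrite zeta_2_Series; apply Rlt_le_trans with (/ INR 1 ^ 2); [simpl; lra|].
  apply (term_le_Series _ (fun k => Rlt_le _ _ (inv_sqr_pos k)) 0 ex_series_inv_sqr).
Qed.

Lemma Fser_scaled A m s : 0 < s ->
  s ^ S m * Fser A m (- s) = Series (fun k => / INR (S k) ^ 2 * tgen A m (INR (S k) * s)).
Proof.
  intros Hs; unfold Fser; rewrite <- Series_scal_l; apply Series_ext; intros k.
  assert (Hk : 0 < INR (S k)) by (apply lt_0_INR; lia).
  unfold Fterm, tgen; replace (INR (S k) * - s) with (- (INR (S k) * s)) by ring.
  rewrite Rpow_mult_distr, <- !tech_pow_Rmult; field; lra.
Qed.
Lemma filterlim_scaled_Fser A d m : A 0%nat = false -> has_density A d ->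
  filterlim (fun s => s ^ S m * Fser A m (- s)) (at_right 0) (locally (d * INR (fact m) * zeta 2)).
Proof.
  intros HA Hd.
  apply (filterlim_ext_loc (fun s => Series (fun k => / INR (S k) ^ 2 * tgen A m (INR (S k) * s)))).
  { apply at_right_forall; intros s Hs; symmetry; now apply Fser_scaled. }
  rewrite zeta_2_Series; apply (filterlim_Series_dominated _ _ _ (INR (fact m) * INR (S m) ^ S m)).
  - intros k; apply Rlt_le, inv_sqr_pos.
  - exact ex_series_inv_sqr.
  - apply at_right_forall; intros s Hs k.
    assert (Hks : 0 < INR (S k) * s) by (apply Rmult_lt_0_compat; [apply lt_0_INR; lia | exact Hs]).
    destruct (tgen_bounds A m _ HA Hks); rewrite Rabs_pos_eq; lra.
  - intros k; apply (filterlim_comp _ _ _ (fun s => INR (S k) * s) (tgen A m) _ (at_right 0)).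
    + apply filterlim_scal_at_right_0, lt_0_INR; lia.
    + exact (tgen_lim A d m HA Hd).
Qed.

Theorem proposition4p4 (A : nat -> bool) (d : R) :
  A 0%nat = false ->
  has_density A d ->
  0 < d ->
  forall m : nat,
    filterlim
      (fun s => Derive_n (F_A A) m (- s)
                / (d * zeta 2 * Gamma_nat_succ m * / s ^ (S m)))
      (at_right 0) (locally 1).
Proof.
  intros HA Hd Hd0 m; unfold Gamma_nat_succ.
  set (c := d * INR (fact m) * zeta 2).
  assert (Hc : 0 < c).
  { apply Rmult_lt_0_compat; [apply Rmult_lt_0_compat; [lra | apply INR_fact_pos] | apply zeta_2_pos]. }
  apply (filterlim_ext_loc (fun s => / c * (s ^ S m * Fser A m (- s)))).
  - apply at_right_forall; intros s Hs.
    rewrite <- Derive_n_F_A by (easy || lra); unfold c.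
    assert (0 < s ^ S m) by (apply pow_lt; lra).
    field; repeat split; try apply Rgt_not_eq; try apply INR_fact_pos; try apply zeta_2_pos; lra.
  - replace 1 with (/ c * c) by (apply Rinv_l; lra).
    exact (filterlim_comp _ _ _ _ _ _ _ _ (filterlim_scaled_Fser A d m HA Hd)
             (filterlim_scal_r (K := R_AbsRing) (V := R_NormedModule) _ _)).
Qed.
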